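(* LCP-aware insertion sort, as described in the context, sorts any sequence of $n$ strings with common prefix length $\bar h$ and computes its LCP array $H$; it performs at most $L(H)+\frac{n(n-1)}{2}$ character comparisons and runs in $O(D+n^2)$ time.
   Context: Strings are zero-terminated finite sequences over a totally ordered alphabet, ordered lexicographically; $\mathrm{lcp}(s,t)$ is the length of their longest common prefix. For a sorted sequence $s_1\le\dots\le s_n$ its LCP array is $H=(\bot,h_2,\dots,h_n)$, $h_i=\mathrm{lcp}(s_{i-1},s_i)$, and $L(H)=\sum_{i\ge2}h_i$. $D$ is the distinguishing prefix size: the sum over the strings of the length of the shortest prefix not shared by any other string of the input ($D\ge L(H)$). LCP-aware insertion sort: for $j=1,\dots,n$ the string $x=s_j$ is inserted into the already sorted prefix $s_1,\dots,s_{j-1}$ (whose LCP array is maintained) by scanning positions from the right while shifting elements (and their LCP entries) one place to the right. The scan maintains $h'$, the known LCP of $x$ with the element $t$ immediately to its right in the final order so far (initially $h'=\bar h$, with no element to the right). At each step let $u$ be the next element to the left, with stored LCP $g=\mathrm{lcp}(u,t)$ ($t$ the element just passed). If there is no such $u$, insert $x$ at the front. If $g<h'$: $x>u$, so $x$ is inserted between $u$ and $t$, with LCP entries $\mathrm{lcp}(u,x)=g$ and $\mathrm{lcp}(x,t)=h'$. If $g>h'$: $x<u$ without character comparisons; $u$ is shifted right and the scan continues with $h'$ unchanged. If $g=h'$: characters of $x$ and $u$ are compared from position $h'+1$ on, increasing the common length $h''$ while they are equal and not the terminator; if then $x\ge u$, insert $x$ between $u$ and $t$ with LCP entries $h''$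 (to $u$) and the old $h'$ (to $t$); otherwise shift $u$ right and continue with $h':=h''$. Counting convention: each character comparison yielding equality counts one, and the final mismatch test together with the $\ge$ test counts one; no other comparisons are character comparisons. *)

From mathcomp Require Import all_boot all_order.
Set Implicit Arguments. Unset Strict Implicit. Unset Printing Implicit Defensive.
Import Order.TTheory.
Local Open Scope order_scope.

Section Strings.
Context {disp : Order.disp_t} {T : orderType disp}.

(* A string is a seq T; the zero terminator is implicit: position i >= size s
   holds the terminator, which is smaller than every character of T. *)
Notation str := (seq T).

(* lexicographic order (a proper prefix is smaller, since the terminator is
   the least character) *)
Fixpoint lexle (s t : str) : bool :=
  match s, t with
  | [::], _ => true
  | _ :: _, [::] => false
  | a :: s', b :: t' => (a < b) || ((a == b) && lexle s' t')
  end.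

Fixpoint lcp (s t : str) : nat :=
  match s, t with
  | a :: s', b :: t' => if a == b then (lcp s' t').+1 else 0
  | _, _ => 0
  end.

(* LCP array H = (bot, h_2, ..., h_n); bot is None *)
Definition lcp_array (s : seq str) : seq (option nat) :=
  match s with
  | [::] => [::]
  | a :: s' => None :: [seq Some h | h <- pairmap lcp a s']
  end.

Definition Lsum (s : seq str) : nat :=
  match s with
  | [::] => 0
  | a :: s' => sumn (pairmap lcp a s')
  end.

(* distinguishing prefix size D: for each string, the length of its shortest
   prefix not shared by any other string of the input (= 1 + max lcp with the
   other strings, counting the terminator if needed) *)
Definition Dsize (ss : seq str) : nat :=
  \sum_(i < size ss)
     (\max_(j < size ss | j != i) lcp (nth [::] ss i) (nth [::] ss j)).+1.

(* Returns (k, ge): k = number of equal, non-terminator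
   character pairs met; ge = (x >= u) decided by the final mismatch test. *)
Fixpoint cmpsuf (xs us : str) : nat * bool :=
  match xs, us with
  | a :: xs', b :: us' =>
      if a == b then let: (k, ge) := cmpsuf xs' us' in (k.+1, ge)
      else (0, b < a)
  | [::], _ => (0, us == [::])
  | _ :: _, [::] => (0, true)
  end.

Definition setfirst (p : seq (str * option nat)) (h : nat) :=
  match p with
  | [::] => [::]
  | (t, _) :: p' => (t, Some h) :: p'
  end.

(* One insertion.  rl = the not yet scanned part of the sorted prefix, in
   reverse order (head = next element u to the left), each element paired
   with its stored LCP entry (LCP with its left neighbour, None = bot).
   passed = already scanned (shifted) elements in sorted order, head = t.
   h' = known lcp(x,t); g = stored lcp(u,t) (when there is no t, g = hbar,
   which forces a character comparison starting at hbar).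
   Returns (new sorted list with LCP entries, #char comparisons, #steps). *)
Fixpoint ins (x : str) (h' g : nat) (rl passed : seq (str * option nat))
    (cmp steps : nat) : seq (str * option nat) * nat * nat :=
  match rl with
  | [::] => ((x, None) :: setfirst passed h', cmp, steps.+1)
  | (u, e) :: rl' =>
      if g < h' then
        (rev rl ++ (x, Some g) :: setfirst passed h', cmp, steps.+1)
      else if h' < g then
        ins x h' (odflt 0 e) rl' ((u, e) :: passed) cmp steps.+1
      else
        let: (k, ge) := cmpsuf (drop h' x) (drop h' u) in
        if ge then
          (rev rl ++ (x, Some (h' + k)) :: setfirst passed h',
           cmp + k.+1, steps.+1)
        else
          ins x (h' + k) (odflt 0 e) rl' ((u, e) :: passed)
              (cmp + k.+1) steps.+1
  end.

Definition isort_step (hbar : nat)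
    (st : seq (str * option nat) * nat * nat) (x : str) :=
  let: (l, c, s) := st in
  let: (l', c', s') := ins x hbar hbar (rev l) [::] 0 0 in
  (l', c + c', s + s').

Definition lcp_isort (hbar : nat) (ss : seq str) :=
  foldl (isort_step hbar) ([::], 0, 0) ss.

End Strings.

From mathcomp Require Import all_boot all_order.
From mathcomp Require Import zify.
Set Implicit Arguments. Unset Strict Implicit. Unset Printing Implicit Defensive.
Import Order.TTheory.

(* Let x be inserted, t its current right neighbour with h' = lcp(x,t), and u
   the next element to the left with stored g = lcp(u,t).  Since lcp is an
   ultrametric, g < h' gives u <= x with lcp(u,x) = g, and g > h' gives x <= u
   with lcp(x,u) = h'; characters are read only when g = h', and every equal
   character raises h'.  So the comparisons made so far never exceed
   h' + (number of steps), and when x lands between u and t the increase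
   lcp(u,x) + lcp(x,t) - lcp(u,t) of L pays for the h' part.  Summing over the
   insertions gives L(H) + n(n-1)/2; the same count bounds the work of the
   j-th insertion by O(j + max lcp(x, earlier strings)), which sums to
   O(D + n^2). *)

Section LcpInsertionSort.
Context {disp : Order.disp_t} {T : orderType disp}.
Notation str := (seq T).
Notation entries := (seq (str * option nat)).

Lemma lcpC (a b : str) : lcp a b = lcp b a.
Proof.
elim: a b => [|x a IH] [|y b] //=.
by rewrite eq_sym; case: eqP => // _; rewrite IH.
Qed.

Lemma lcp_ultrametric (a b c : str) : minn (lcp a b) (lcp b c) <= lcp a c.
Proof.
elim: a b c => [|x a IH] [|y b] [|z c] //=; try by rewrite ?minn0 ?min0n.
case: (eqVneq x y) => [<-|_]; last by rewrite min0n.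
case: (x == z); last by rewrite minn0.
by rewrite minnSS ltnS.
Qed.

Lemma lcp_eq_of_lt (a b t : str) : lcp a t < lcp b t -> lcp a b = lcp a t.
Proof.
have := lcp_ultrametric a b t; have := lcp_ultrametric a t b.
rewrite (lcpC t b); lia.
Qed.

Lemma lexle_totalN (a b : str) : ~~ lexle a b -> lexle b a.
Proof.
suff: lexle a b || lexle b a by case: (lexle a b).
elim: a b => [|x a IH] [|y b] //=.
by case: (ltgtP x y) => //= ->; rewrite ?eqxx.
Qed.

Lemma lexle_lcp (a b t : str) : lexle a t -> lcp a t < lcp b t -> lexle a b.
Proof.
elim: a b t => [|x a IH] [|y b] [|z t] //=.
case: (eqVneq y z) => [->|]; last by [].
case/orP=> [->//|/andP[/eqP-> at']]; rewrite eqxx ltnS => lt.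
by rewrite (IH _ _ at' lt) orbT.
Qed.

Lemma cmpsuf_drop h (a b : str) : h <= lcp a b ->
  cmpsuf (drop h a) (drop h b) = (lcp a b - h, lexle b a).
Proof.
elim: h a b => [|h IH] a b.
  rewrite !drop0 subn0 => _; elim: a b => [|x a IHa] [|y b] //=.
  case: (eqVneq x y) => [->|ne]; first by rewrite IHa ?eqxx ltxx.
  by rewrite orbF.
case: a b => [|x a] [|y b] //=.
by case: (eqVneq x y) => [->|] //; rewrite ltnS ?eqxx ltxx subSS => /IH.
Qed.

Lemma lcp_le_bigmax x y (A : seq str) :
  y \in A -> lcp x y <= \max_(z <- A) lcp x z.
Proof. by move=> yA; apply: leq_bigmax_seq. Qed.

Fixpoint lcp_valid (p : option str) (l : entries) : bool :=
  if l is (s, e) :: l' then (e == omap (lcp^~ s) p) && lcp_valid (Some s) l'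
  else true.

Lemma lcp_valid_lcp_array (l : entries) :
  lcp_valid None l -> map snd l = lcp_array (map fst l).
Proof.
case: l => [|[s e] l] //= /andP[/eqP-> valid]; congr (_ :: _).
by elim: l s valid => [|[t f] l IH] s //= /andP[/eqP-> /IH->].
Qed.

Lemma lcp_valid_cat p (l1 l2 : entries) :
  lcp_valid p (l1 ++ l2) =
  lcp_valid p l1 && lcp_valid (last p [seq Some z.1 | z <- l1]) l2.
Proof. by elim: l1 p => [|[s e] l1 IH] p //=; rewrite IH andbA. Qed.

Lemma lcp_valid_rev_cat (rl l : entries) :
  lcp_valid None (rev rl ++ l) =
  lcp_valid None (rev rl) && lcp_valid (ohead (map fst rl)) l.
Proof.
rewrite lcp_valid_cat; congr (_ && lcp_valid _ _).
by case: rl => [|z rl] //=; rewrite rev_cons map_rcons last_rcons.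
Qed.

Definition olcp (a b : option str) : nat :=
  if a is Some a then if b is Some b then lcp a b else 0 else 0.

Lemma Lsum_cat_cons (A : seq str) x B :
  Lsum (A ++ x :: B) = Lsum (rcons A x) + Lsum (x :: B).
Proof.
case: A => [|a A] //=.
by rewrite -cats1 !pairmap_cat !sumn_cat /= addn0 addnA.
Qed.

Lemma Lsum_insert (R : seq str) x B :
  Lsum (rev R ++ x :: B) + olcp (ohead R) (ohead B) =
  Lsum (rev R ++ B) + olcp (ohead R) (Some x) + olcp (Some x) (ohead B).
Proof.
case: R => [|u R]; case: B => [|t B]; rewrite ?rev_cons ?cats0 /= ?addn0 //.
- exact: addnC.
- by rewrite cat_rcons Lsum_cat_cons /= addn0.
- by rewrite !cat_rcons !Lsum_cat_cons /=; lia.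
Qed.

Lemma sorted_insert (R B : seq str) x :
  sorted lexle (rev R ++ B) ->
  (if R is u :: _ then lexle u x else True) ->
  (if B is t :: _ then lexle x t else True) ->
  sorted lexle (rev R ++ x :: B).
Proof.
case: R => [|u R]; rewrite ?rev_cons ?cat_rcons; case: B => [|t B] //=.
- by move=> sB _ ->.
- by rewrite !sorted_cat_cons /= => /andP[-> _] ->.
- by rewrite !sorted_cat_cons /= => /and3P[-> _ ->] -> ->.
Qed.

Lemma map_fst_setfirst (l : entries) h : map fst (setfirst l h) = map fst l.
Proof. by case: l => [|[]]. Qed.

Lemma lcp_valid_insert (rl l : entries) x h :
  lcp_valid None (rev rl ++ l) ->
  (if l is (t, _) :: _ then h = lcp x t else True) ->
  lcp_valid None
    (rev rl ++ (x, omap (lcp^~ x) (ohead (map fst rl))) :: setfirst l h).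
Proof.
rewrite !lcp_valid_rev_cat => /andP[-> valid] /=; rewrite eqxx.
by case: l valid => [|[t e] l] //= /andP[_ ->] ->; rewrite eqxx.
Qed.

Definition ins_post x (l res : entries) cmp steps : Prop :=
  [/\ perm_eq (map fst res) (x :: map fst l), sorted lexle (map fst res),
      lcp_valid None res,
      cmp + Lsum (map fst l) <= size l + Lsum (map fst res)
    & cmp + steps <= (size l).*2.+1 + \max_(y <- map fst l) lcp x y].

Lemma ins_post_insert x (rl l : entries) h cmp steps :
  let R := map fst rl in let B := map fst l in let n := size (rev rl ++ l) in
  lcp_valid None (rev rl ++ l) -> sorted lexle (map fst (rev rl ++ l)) ->
  (if R is u :: _ then lexle u x else True) ->
  (if l is (t, _) :: _ then lexle x t /\ h = lcp x t else True) ->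
  cmp + olcp (ohead R) (ohead B) <=
    n + olcp (ohead R) (Some x) + olcp (Some x) (ohead B) ->
  cmp <= n + \max_(y <- map fst (rev rl ++ l)) lcp x y -> steps <= n.+1 ->
  ins_post x (rev rl ++ l)
    (rev rl ++ (x, omap (lcp^~ x) (ohead R)) :: setfirst l h) cmp steps.
Proof.
move=> R B n valid sorted_l ux xt cost cost_max steps_le.
have fst_l : map fst (rev rl ++ l) = rev R ++ B by rewrite map_cat map_rev.
have fst_res : map fst (rev rl ++ (x, omap (lcp^~ x) (ohead R)) :: setfirst l h)
    = rev R ++ x :: B.
  by rewrite map_cat /= map_fst_setfirst map_rev.
have [xt_B h_l] : (if B is t :: _ then lexle x t else True) /\
    (if l is (t, _) :: _ then h = lcp x t else True).
  by move: xt; rewrite /B; case: (l) => [|[]] //= ? ? ? [].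
split => //; rewrite ?fst_res.
- by rewrite fst_l (perm_catCA _ [:: x]).
- by apply: sorted_insert ux xt_B; rewrite -fst_l.
- exact: lcp_valid_insert.
- by rewrite fst_l; have := Lsum_insert R x B; lia.
- lia.
Qed.

(* [rev rl ++ passed] is the sorted prefix with [u] heading [rl] and [t]
   heading [passed]; before the first step there is no [t], and [g = h'] then
   forces a character comparison. *)
Definition scan_inv x h' g (rl passed : entries) cmp steps : Prop :=
  let l := rev rl ++ passed in
  [/\ lcp_valid None l, sorted lexle (map fst l), steps + size rl = size l &
      if passed is (t, _) :: _ then
        [/\ lexle x t, h' = lcp x t, cmp <= h' + steps &
            if rl is (u, _) :: _ then g = lcp u t else True]
      else
        [/\ cmp = 0, g = h' &
             if rl is (u, _) :: _ then h' <= lcp x u else True]].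

Lemma scan_inv_next x h' g u e (rl passed : entries) cmp steps cmp' :
  scan_inv x h' g ((u, e) :: rl) passed cmp steps -> lexle x u ->
  cmp' <= lcp x u + steps.+1 ->
  scan_inv x (lcp x u) (odflt 0 e) rl ((u, e) :: passed) cmp' steps.+1.
Proof.
rewrite /scan_inv rev_cons cat_rcons => -[valid sorted_l size_l _] xu cost.
split => //; first by rewrite addSnnS.
split => //; case: rl {sorted_l size_l} valid => [|[u' e'] rl] //.
by rewrite lcp_valid_rev_cat /= => /andP[_ /andP[/eqP-> _]].
Qed.

Lemma sorted_lexle_adjacent u e (rl : entries) t et (P : entries) :
  sorted lexle (map fst (rev ((u, e) :: rl) ++ (t, et) :: P)) -> lexle u t.
Proof.
by rewrite rev_cons cat_rcons map_cat sorted_cat_cons /= => /andP[_ /andP[]].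
Qed.

Lemma scan_inv_tie x h' g u e (rl passed : entries) cmp steps :
  scan_inv x h' g ((u, e) :: rl) passed cmp steps -> g = h' ->
  let tn := ohead (map fst passed) in
  h' <= lcp x u /\ olcp (Some u) tn = olcp (Some x) tn.
Proof.
case=> _ _ _; case: passed => [[_ _ ?] | [t et] P [xt hx _ ->]] /= gh.
  by split.
split; last by rewrite gh hx.
by have := lcp_ultrametric x t u; rewrite (lcpC t u) gh -hx minnn.
Qed.

Lemma ins_correct_front x h' g (passed : entries) cmp steps :
  scan_inv x h' g [::] passed cmp steps ->
  ins_post x passed ((x, None) :: setfirst passed h') cmp steps.+1.
Proof.
case; case: passed => [|[t et] P] valid sorted_l /=; rewrite addn0 => size_l.
  by case=> cmp0 _ _; apply: (@ins_post_insert x [::] [::] h') => //=; lia.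
case=> xt hx cmp_le _; apply: (@ins_post_insert x [::]) => //=; try lia.
apply: (leq_trans cmp_le); rewrite hx size_l addnC leq_add2l.
exact: lcp_le_bigmax (mem_head _ _).
Qed.

Lemma ins_correct x (rl : entries) : forall h' g passed cmp steps,
  scan_inv x h' g rl passed cmp steps ->
  let: (res, cmp', steps') := ins x h' g rl passed cmp steps in
  ins_post x (rev rl ++ passed) res cmp' steps'.
Proof.
elim: rl => [|[u e] rl IH] h' g passed cmp steps inv.
  exact: ins_correct_front inv.
have [valid sorted_l size_l inv_p] := inv.
have cmp_le : cmp <= h' + steps.
  by case: (passed) inv_p => [[-> //] | [t et] P [_ _ ?]].
have steps_lt : steps < size (rev ((u, e) :: rl) ++ passed).
  by rewrite -size_l /= addnS ltnS leq_addr.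
have u_in : u \in map fst (rev ((u, e) :: rl) ++ passed).
  by rewrite map_cat mem_cat map_rev mem_rev /= inE eqxx.
rewrite /= !ltEnat /=; case: ltngtP => [lt_gh | lt_hg | eq_gh].
- case: passed inv_p valid sorted_l steps_lt {inv size_l u_in} => [|[t et] P].
    by case=> _ eq_g; rewrite eq_g ltnn in lt_gh.
  case=> xt hx _ gu valid sorted_l steps_lt.
  have ut := sorted_lexle_adjacent sorted_l.
  have lcp_ux : lcp u x = g by rewrite gu; apply: lcp_eq_of_lt; rewrite -gu -hx.
  have t_in : t \in map fst (rev ((u, e) :: rl) ++ (t, et) :: P).
    by rewrite map_cat mem_cat /= inE eqxx orbT.
  have t_max := lcp_le_bigmax x t_in.
  rewrite -lcp_ux; apply: ins_post_insert => //=; try lia.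
  by apply: lexle_lcp ut _; rewrite -gu -hx.
- have [t [xt hx gu]] : exists t, [/\ lexle x t, h' = lcp x t & g = lcp u t].
    case: (passed) inv_p => [[_ eq_g] | [t et] P [xt hx _ gu]].
      by rewrite eq_g ltnn in lt_hg.
    by exists t.
  have lcp_xu : lcp x u = h'.
    by rewrite hx; apply: lcp_eq_of_lt; rewrite -hx -gu.
  have xu : lexle x u by apply: lexle_lcp xt _; rewrite -hx -gu.
  have cost : cmp <= lcp x u + steps.+1 by lia.
  rewrite -lcp_xu rev_cons cat_rcons.
  exact: IH (scan_inv_next inv xu cost).
- have [h_xu same_t] := scan_inv_tie inv eq_gh.
  have u_max := lcp_le_bigmax x u_in.
  rewrite (cmpsuf_drop h_xu) (subnKC h_xu); case: ifP => ux.
  + have lcp_ux := lcpC u x; rewrite -lcp_ux.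
    apply: ins_post_insert => //; try lia.
      by case: (passed) inv_p => [|[t et] P []].
    change (ohead [seq z.1 | z <- (u, e) :: rl]) with (Some u).
    rewrite same_t /=; lia.
  + have xu := lexle_totalN (negbT ux).
    have cost : cmp + (lcp x u - h').+1 <= lcp x u + steps.+1 by lia.
    rewrite rev_cons cat_rcons.
    exact: IH (scan_inv_next inv xu cost).
Qed.

Definition Dleft (ss : seq str) : nat :=
  \sum_(0 <= i < size ss)
     (\max_(0 <= j < i) lcp (nth [::] ss i) (nth [::] ss j)).+1.

Lemma Dleft_rcons (ss : seq str) x :
  Dleft (rcons ss x) = Dleft ss + (\max_(y <- ss) lcp x y).+1.
Proof.
rewrite /Dleft size_rcons big_nat_recr //= nth_rcons ltnn eqxx (big_nth [::]).
congr (_ + _.+1).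
  apply: eq_big_nat => i /andP[_ lt_i]; rewrite nth_rcons lt_i; congr _.+1.
  apply: eq_big_nat => j /andP[_ lt_j].
  by rewrite nth_rcons (ltn_trans lt_j lt_i).
by apply: eq_big_nat => j /andP[_ lt_j]; rewrite nth_rcons lt_j.
Qed.

Lemma Dleft_le_Dsize (ss : seq str) : Dleft ss <= Dsize ss.
Proof.
rewrite /Dleft /Dsize big_mkord; apply: leq_sum => i _; rewrite ltnS big_nat.
apply/bigmax_leqP_seq => j; rewrite mem_index_iota => /andP[_ lt_ji] _.
have lt_j : j < size ss := ltn_trans lt_ji (ltn_ord i).
have neq : Ordinal lt_j != i by rewrite -val_eqE /= neq_ltn lt_ji.
exact: (@leq_bigmax_cond _ (fun k : 'I_(size ss) => k != i)
  (fun k : 'I_(size ss) => lcp (nth [::] ss i) (nth [::] ss k)) _ neq).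
Qed.

Definition sort_state (ss : seq str) (st : entries * nat * nat) : Prop :=
  let: (l, comps, steps) := st in
  [/\ perm_eq (map fst l) ss, sorted lexle (map fst l), lcp_valid None l,
      comps <= Lsum (map fst l) + 'C(size ss, 2)
    & comps + steps <= Dleft ss + size ss ^ 2].

Lemma sort_state_step hbar (ss : seq str) st x :
  sort_state ss st -> (forall y, y \in ss -> hbar <= lcp x y) ->
  sort_state (rcons ss x) (isort_step hbar st x).
Proof.
case: st => [[l c] s] [perm_l sorted_l valid comps_le work_le] hbar_le /=.
have inv0 : scan_inv x hbar hbar (rev l) [::] 0 0.
  rewrite /scan_inv revK cats0 size_rev; split => //; split => //.
  case E: (rev l) => [|[u e] rl] //; apply: hbar_le.
  by rewrite -(perm_mem perm_l) -mem_rev -map_rev E mem_head.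
have := ins_correct inv0; rewrite revK cats0.
case: ins => [[l' c'] s'] [perm' sorted' valid' comps' work'].
have size_l : size l = size ss by rewrite -(size_map fst) (perm_size perm_l).
have max_eq : \max_(y <- map fst l) lcp x y = \max_(y <- ss) lcp x y.
  exact: perm_big perm_l.
split => //.
- by rewrite perm_sym perm_rcons perm_sym (perm_trans perm') // perm_cons.
- by rewrite size_rcons binS bin1; lia.
- by rewrite size_rcons Dleft_rcons; nia.
Qed.

Lemma sort_state_foldl hbar (ss r : seq str) st :
  (forall x y, x \in ss ++ r -> y \in ss ++ r -> hbar <= lcp x y) ->
  sort_state ss st -> sort_state (ss ++ r) (foldl (isort_step hbar) st r).
Proof.
elim: r ss st => [|x r IH] ss st hbar_le inv /=; first by rewrite cats0.
rewrite -cat_rcons; apply: IH.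
  by move=> y z; rewrite cat_rcons; apply: hbar_le.
apply: sort_state_step inv _ => y y_in.
by apply: hbar_le; rewrite mem_cat ?y_in ?mem_head ?orbT.
Qed.

End LcpInsertionSort.

Theorem mainTheorem6 :
  exists K : nat,
  forall (disp : Order.disp_t) (T : orderType disp) (hbar : nat)
         (ss : seq (seq T)),
    (forall x y, x \in ss -> y \in ss -> hbar <= lcp x y) ->
    let: (out, comps, steps) := lcp_isort hbar ss in
    let n := size ss in
    [/\ perm_eq (map fst out) ss,
        sorted lexle (map fst out),
        map snd out = lcp_array (map fst out),
        comps <= Lsum (map fst out) + (n * (n - 1)) %/ 2
      & comps + steps <= K * (Dsize ss + n ^ 2)].
Proof.
exists 1 => disp T hbar ss hbar_le.
have := @sort_state_foldl _ _ hbar [::] ss ([::], 0, 0) hbar_le.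
rewrite /lcp_isort; case: foldl => [[out comps] steps] [] //.
move=> perm_out sorted_out valid_out comps_le work_le; split => //.
- exact: lcp_valid_lcp_array.
- by rewrite subn1 divn2 -bin2.
- by rewrite mul1n (leq_trans work_le) // leq_add2r Dleft_le_Dsize.
Qed.
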